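(* Let $S$ and $A$ be finite-dimensional quantum systems with $d_A=\dim A$, let $\rho^A$ be a density matrix on $A$, $U^{SA}$ a unitary on $S\otimes A$, and define the CPTP map $\Phi(X):=\operatorname{Tr}_A[U^{SA}(X\otimes\rho^A)(U^{SA})^\dagger]$ on operators of $S$. Let $\Phi^\dagger$ be the trace-dual of $\Phi$. Then for every density matrix $\sigma$ on $S$, $\operatorname{Tr}[\Phi^\dagger(\sigma)]\le d_A$.
   Context: The trace-dual $\Phi^\dagger$ is the linear map satisfying $\operatorname{Tr}[\Phi(X)Y]=\operatorname{Tr}[X\Phi^\dagger(Y)]$ for all operators $X,Y$. *)

From mathcomp Require Import all_boot all_order all_algebra.
From mathcomp Require Export mxtens.
Set Implicit Arguments. Unset Strict Implicit. Unset Printing Implicit Defensive.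
Import Order.TTheory GRing.Theory Num.Theory.
Local Open Scope ring_scope.
Local Open Scope sesquilinear_scope.

Definition psdmx (C : numClosedFieldType) (n : nat) (A : 'M[C]_n) : Prop :=
  A \is hermsymmx /\ forall v : 'cV[C]_n, 0 <= (v ^t* *m A *m v) 0 0.

Definition density (C : numClosedFieldType) (n : nat) (A : 'M[C]_n) : Prop :=
  psdmx A /\ \tr A = 1.

(* partial trace over the second factor A of S (x) A, with the Kronecker
   product convention of mxtens (basis index (i,k) of S (x) A is
   mxtens_index (i,k)) *)
Definition ptraceA (C : numClosedFieldType) (n m : nat) (M : 'M[C]_(n * m)) : 'M[C]_n :=
  \matrix_(i, j) \sum_(k < m) M (mxtens_index (i, k)) (mxtens_index (j, k)).

Definition Phi (C : numClosedFieldType) (n m : nat) (U : 'M[C]_(n * m)) (rho : 'M[C]_m)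
  (X : 'M[C]_n) : 'M[C]_n :=
  ptraceA (U *m (X *t rho) *m U ^t*).

From mathcomp Require Import all_boot all_order all_algebra.
Import Order.TTheory GRing.Theory Num.Theory.

Local Open Scope ring_scope.
Local Open Scope sesquilinear_scope.

(* Since Tr[Phi^dagger(sigma)] = Tr[Phi(1) sigma] and sigma is positive with unit
   trace, it suffices that Phi(1) <= d_A 1 in the Loewner order.  A density
   matrix has its eigenvalues in [0, 1], so rho <= 1; the maps X |-> 1 (x) X,
   X |-> U X U^dagger and Tr_A are monotone, and U (1 (x) 1) U^dagger = 1 while
   Tr_A 1 = d_A 1. *)

Lemma sum_mxtens_index (V : nmodType) n m (F : 'I_(n * m) -> V) :
  \sum_x F x = \sum_(i < n) \sum_(k < m) F (mxtens_index (i, k)).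
Proof.
rewrite pair_big (reindex (@mxtens_index n m)) /=; last first.
  by exists (@mxtens_unindex n m) => x _; rewrite (mxtens_indexK, mxtens_unindexK).
by apply: eq_bigr => -[i k].
Qed.

Lemma tens1mx1 (R : pzRingType) n m : (1%:M : 'M[R]_n) *t (1%:M : 'M[R]_m) = 1%:M.
Proof.
apply/matrixP => x y; case: (mxtens_indexP x) => i k; case: (mxtens_indexP y) => j l.
rewrite tensmxE !mxE (inj_eq (can_inj (@mxtens_indexK n m))) xpair_eqE.
by case: (i == j); case: (k == l); rewrite ?mulr1 ?mulr0.
Qed.

Lemma tensmx_colE (R : pzRingType) n m (v : 'cV[R]_n) (w : 'cV[R]_m) i l :
  (v *t w) (mxtens_index (i, l)) 0 = v i 0 * w l 0.
Proof. by rewrite mxE mxtens_indexK /= !ord1. Qed.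

Section QuadraticForm.
Context {C : numClosedFieldType}.

Definition qform {k} (A : 'M[C]_k) (v : 'cV[C]_k) : C := (v ^t* *m A *m v) 0 0.

Lemma qformE k (A : 'M[C]_k) v :
  qform A v = \sum_i \sum_j (v i 0)^* * A i j * v j 0.
Proof.
rewrite /qform mxE; under eq_bigr => j _ do rewrite mxE big_distrl.
by rewrite exchange_big; apply: eq_bigr => i _; apply: eq_bigr => j _; rewrite !mxE.
Qed.

Lemma qform1E k (v : 'cV[C]_k) : qform 1%:M v = \sum_i (v i 0)^* * v i 0.
Proof. by rewrite /qform mulmx1 mxE; apply: eq_bigr => i _; rewrite !mxE. Qed.

Lemma qform_diag k (d : 'rV[C]_k) v :
  qform (diag_mx d) v = \sum_i d 0 i * ((v i 0)^* * v i 0).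
Proof.
by rewrite /qform mul_mx_diag mxE; apply: eq_bigr => i _; rewrite !mxE -mulrA mulrCA.
Qed.

Lemma qform_delta k (A : 'M[C]_k) i : qform A (delta_mx i 0) = A i i.
Proof.
rewrite qformE (big_only1 i) // => [|j /negPf nji _]; last first.
  by rewrite big1 // => l _; rewrite !mxE nji conjC0 !mul0r.
rewrite (big_only1 i) // => [|l /negPf nli _]; last by rewrite !mxE nli mulr0.
by rewrite !mxE !eqxx conjC1 mul1r mulr1.
Qed.

Lemma qform_congr k l (A : 'M[C]_k) (B : 'M[C]_(k, l)) v :
  qform (B ^t* *m A *m B) v = qform A (B *m v).
Proof. by rewrite /qform trmx_mul map_mxM !mulmxA. Qed.

Lemma qform1_unitary {k} {U : 'M[C]_k} v :
  U \is unitarymx -> qform 1%:M (U *m v) = qform 1%:M v.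
Proof.
move=> Uu; have /unitarymxP : U ^t* \is unitarymx by rewrite trmxC_unitary.
by rewrite -qform_congr mulmx1 trmxCK => ->.
Qed.

Definition loewner_le {k} (A B : 'M[C]_k) : Prop := forall v, qform A v <= qform B v.

Lemma loewner_le_conj {k l} (X : 'M[C]_(k, l)) {A B : 'M[C]_l} :
  loewner_le A B -> loewner_le (X *m A *m X ^t*) (X *m B *m X ^t*).
Proof.
by move=> AB v; rewrite -[X in X *m A]trmxCK -[X in X *m B]trmxCK !qform_congr.
Qed.

Section Spectral.
Variables (k : nat) (S : 'M[C]_k).
Hypothesis S_herm : S \is hermsymmx.
Let P := spectralmx S.
Let d := spectral_diag S.

Lemma spectral_decomposition : S = P ^t* *m diag_mx d *m P.
Proof.
have /hermitian_normalmx/orthomx_spectralP {1}-> := S_herm.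
by rewrite invmx_unitary ?spectral_unitarymx.
Qed.

Let P_unitary : P *m P ^t* = 1%:M.
Proof. exact/unitarymxP/spectral_unitarymx. Qed.

Lemma qform_spectral v :
  qform S v = \sum_i d 0 i * (((P *m v) i 0)^* * (P *m v) i 0).
Proof. by rewrite {1}spectral_decomposition qform_congr qform_diag. Qed.

Lemma qform_spectral_eigvec i : qform S (P ^t* *m delta_mx i 0) = d 0 i.
Proof.
rewrite {1}spectral_decomposition qform_congr mulmxA P_unitary mul1mx.
by rewrite qform_delta mxE eqxx mulr1n.
Qed.

Lemma mxtrace_spectral : \tr S = \sum_i d 0 i.
Proof.
by rewrite {1}spectral_decomposition mxtrace_mulC mulmxA P_unitary mul1mx mxtrace_diag.
Qed.

Lemma mxtrace_mul_spectral (M : 'M[C]_k) :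
  \tr (M *m S) = \sum_i qform M (P ^t* *m delta_mx i 0) * d 0 i.
Proof.
rewrite {1}spectral_decomposition !mulmxA mxtrace_mulC !mulmxA mul_mx_diag /mxtrace.
by apply: eq_bigr => i _; rewrite mxE -qform_congr trmxCK qform_delta.
Qed.
End Spectral.

Lemma psd_spectral_diag_ge0 k (S : 'M[C]_k) i :
  psdmx S -> 0 <= spectral_diag S 0 i.
Proof. by case=> S_herm S_ge0; rewrite -qform_spectral_eigvec //; apply: S_ge0. Qed.

Lemma ler_mxtrace_mulr {k} {M N S : 'M[C]_k} :
  psdmx S -> loewner_le M N -> \tr (M *m S) <= \tr (N *m S).
Proof.
move=> S_psd MN; have [S_herm _] := S_psd.
rewrite !mxtrace_mul_spectral //; apply: ler_sum => i _.
by rewrite ler_wpM2r ?psd_spectral_diag_ge0.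
Qed.

Lemma density_loewner_le1 {k} {R : 'M[C]_k} : density R -> loewner_le R 1%:M.
Proof.
move=> [R_psd R_tr] v; have [R_herm _] := R_psd.
rewrite qform_spectral // -(qform1_unitary v (spectral_unitarymx R)) qform1E.
apply: ler_sum => i _; rewrite ler_piMl //; first by rewrite mulrC mul_conjC_ge0.
rewrite -R_tr mxtrace_spectral // (bigD1 i) //= lerDl sumr_ge0 // => j _.
exact: psd_spectral_diag_ge0.
Qed.

Section Tensor.
Context {n m : nat}.

Lemma qform_tens1mx (A : 'M[C]_m) (x : 'cV[C]_(n * m)) :
  qform (1%:M *t A) x = \sum_i qform A (\col_l x (mxtens_index (i, l)) 0).
Proof.
rewrite qformE sum_mxtens_index; apply: eq_bigr => i _.
rewrite qformE; apply: eq_bigr => k _.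
rewrite sum_mxtens_index (big_only1 i) // => [|j /negPf nji _]; last first.
  by rewrite big1 // => l _; rewrite tensmxE mxE eq_sym nji mul0r mulr0 mul0r.
by apply: eq_bigr => l _; rewrite tensmxE !mxE eqxx mul1r.
Qed.

Lemma loewner_le_tens1mx {A B : 'M[C]_m} :
  loewner_le A B -> loewner_le (1%:M *t A : 'M_(n * m)) (1%:M *t B).
Proof. by move=> AB x; rewrite !qform_tens1mx; apply: ler_sum. Qed.

Lemma qform_ptraceA (N : 'M[C]_(n * m)) v :
  qform (ptraceA N) v = \sum_k qform N (v *t (delta_mx k 0 : 'cV_m)).
Proof.
rewrite qformE; under eq_bigr => i _ do under eq_bigr => j _ do
  rewrite mxE big_distrr big_distrl.
under eq_bigr => i _ do rewrite exchange_big.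
rewrite exchange_big; apply: eq_bigr => k _ /=.
rewrite qformE sum_mxtens_index; apply: eq_bigr => i _.
rewrite (big_only1 k) // => [|l /negPf nlk _]; last first.
  by rewrite big1 // => y _; rewrite tensmx_colE mxE nlk mulr0 conjC0 !mul0r.
rewrite sum_mxtens_index; apply: eq_bigr => j _.
rewrite (big_only1 k) // => [|l /negPf nlk _]; last first.
  by rewrite !tensmx_colE !mxE nlk !mulr0.
by rewrite !tensmx_colE !mxE !eqxx !mulr1.
Qed.

Lemma loewner_le_ptraceA {N N' : 'M[C]_(n * m)} :
  loewner_le N N' -> loewner_le (ptraceA N) (ptraceA N').
Proof. by move=> NN' v; rewrite !qform_ptraceA; apply: ler_sum. Qed.

Lemma ptraceA1 : ptraceA (1%:M : 'M[C]_(n * m)) = m%:R%:M.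
Proof.
apply/matrixP => i j.
rewrite !mxE (eq_bigr (fun _ => (i == j)%:R)) ?sumr_const ?card_ord.
  by case: (i == j); rewrite ?mulr1n ?mulr0n ?mul0rn.
by move=> k _; rewrite mxE (inj_eq (can_inj (@mxtens_indexK n m))) xpair_eqE eqxx andbT.
Qed.

Lemma loewner_le_Phi1 {rho : 'M[C]_m} {U : 'M[C]_(n * m)} :
  density rho -> U \is unitarymx -> loewner_le (Phi U rho 1%:M) m%:R%:M.
Proof.
move=> rho_density /unitarymxP UU.
have rho_le1 := loewner_le_tens1mx (density_loewner_le1 rho_density).
have := loewner_le_ptraceA (loewner_le_conj U rho_le1).
by rewrite tens1mx1 mulmx1 UU ptraceA1.
Qed.
End Tensor.
End QuadraticForm.

Theorem mainTheorem6 (C : numClosedFieldType) (n m : nat)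
  (rho : 'M[C]_m) (U : 'M[C]_(n * m)) (Phidag : 'M[C]_n -> 'M[C]_n) :
  density rho -> U \is unitarymx ->
  (forall X Y : 'M[C]_n, \tr (Phi U rho X *m Y) = \tr (X *m Phidag Y)) ->
  forall sigma : 'M[C]_n, density sigma -> \tr (Phidag sigma) <= m%:R.
Proof.
move=> rho_density U_unitary Phi_dual sigma [sigma_psd sigma_tr].
rewrite -(mul1mx (Phidag sigma)) -Phi_dual.
apply: le_trans (ler_mxtrace_mulr sigma_psd (loewner_le_Phi1 rho_density U_unitary)) _.
by rewrite mul_scalar_mx mxtraceZ sigma_tr mulr1.
Qed.
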